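(* Let $G$ be a compact Hausdorff group in which every element has a countable Engel sink, and suppose $G$ has an abelian closed normal subgroup $A$ such that $G/A$ is locally nilpotent. Then every element of $G$ has a finite Engel sink.
   Context: Commutators are left-normed, $[a,b]=a^{-1}b^{-1}ab$, and $[x,{}_n g]=[x,g,\dots,g]$ with $g$ repeated $n$ times. An Engel sink of an element $g$ of a group $G$ is a set $\mathscr E(g)\subseteq G$ such that for every $x\in G$ there is a positive integer $n(x,g)$ with $[x,{}_n g]\in\mathscr E(g)$ for all $n\ge n(x,g)$. ''Countable'' means finite or denumerable. A group is locally nilpotent if every finitely generated subgroup is nilpotent. *)

From HB Require Import structures.
From mathcomp Require Import all_boot all_order.
From mathcomp Require Import boolp classical_sets cardinality.
From mathcomp Require Import topology.

Set Implicit Arguments.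
Unset Strict Implicit.
Unset Printing Implicit Defensive.

Local Open Scope classical_set_scope.

Section GroupDefs.
Variables (T : Type) (mul : T -> T -> T) (inv : T -> T) (one : T).

Record is_group : Prop := IsGroup {
  mulA : forall x y z, mul x (mul y z) = mul (mul x y) z;
  mul1g : forall x, mul one x = x;
  mulg1 : forall x, mul x one = x;
  mulVg : forall x, mul (inv x) x = one;
  mulgV : forall x, mul x (inv x) = one }.

Definition comm (a b : T) : T := mul (mul (inv a) (inv b)) (mul a b).

Fixpoint engel_comm (x g : T) (n : nat) : T :=
  match n with 0 => x | k.+1 => comm (engel_comm x g k) g end.

Definition engel_sink (g : T) (E : set T) : Prop :=
  forall x, exists n0 : nat, forall n, (n0 <= n)%N -> E (engel_comm x g n).

Definition is_subgroup (H : set T) : Prop :=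
  H one /\ (forall x y, H x -> H y -> H (mul x y)) /\ (forall x, H x -> H (inv x)).

Definition is_normal (H : set T) : Prop :=
  is_subgroup H /\ forall x h, H h -> H (mul (mul (inv x) h) x).

Definition is_abelian (H : set T) : Prop :=
  forall x y, H x -> H y -> mul x y = mul y x.

Definition gen (S : set T) : set T :=
  fun x => forall H, is_subgroup H -> S `<=` H -> H x.

Definition comm_subgroup (H K : set T) : set T :=
  gen (fun z => exists2 h, H h & exists2 k, K k & z = comm h k).

(* lower central series: lcs H 0 = H = gamma_1(H), lcs H (S i) = [lcs H i, H] *)
Fixpoint lcs (H : set T) (i : nat) : set T :=
  match i with 0 => H | k.+1 => comm_subgroup (lcs H k) H end.

(* For a subgroup H and a normal subgroup A:  HA/A is nilpotent
   iff some term gamma_{c+1}(H) of the lower central series of H lies in A. *)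
Definition nilpotent_mod (A H : set T) : Prop :=
  exists c : nat, lcs H c `<=` A.

(* G/A is locally nilpotent: every finitely generated subgroup of G/A is
   nilpotent; finitely generated subgroups of G/A are exactly <F>A/A for
   finite subsets F of G. *)
Definition locally_nilpotent_mod (A : set T) : Prop :=
  forall F : set T, finite_set F -> nilpotent_mod A (gen F).

End GroupDefs.

Definition is_topological_group (T : topologicalType)
    (mul : T -> T -> T) (inv : T -> T) (one : T) : Prop :=
  is_group mul inv one /\
  continuous (fun p : T * T => mul p.1 p.2) /\ continuous inv.

From Pilot Require Import Defs.
From HB Require Import structures.
From mathcomp Require Import all_boot all_order.
From mathcomp Require Import boolp classical_sets cardinality.
From mathcomp Require Import topology.
From mathcomp Require Import finmap.
From mathcomp Require Import zify.

(* On the abelian normal subgroup A, the map psi : y |-> [y, g] is a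
   continuous endomorphism.  Every y in A has an iterate psi^n(y) in the
   countable Engel sink E of g, so A is covered by the countably many closed
   fibres {y in A | psi^n(y) = e}, e in E, and by the Baire category theorem
   for the compact Hausdorff space A some psi^n is constant on a nonempty
   relatively open subset of A.  Finitely many translates of that set cover
   the compact group A, so the endomorphism psi^n has finite image.  Since
   G/A is locally nilpotent, [x, _c g] lies in A for some c, hence
   [x, _m g] lies in psi^n(A) for all m >= c + n. *)

Set Implicit Arguments.
Unset Strict Implicit.
Unset Printing Implicit Defensive.

Local Open Scope classical_set_scope.

(* [compact_cover] is only stated for pointed spaces. *)
Section PointedCopy.
Variables (T : topologicalType) (x0 : T).
Definition pointed_copy : Type := T.
HB.instance Definition _ := Topological.on pointed_copy.
HB.instance Definition _ := isPointed.Build pointed_copy x0.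

Lemma compact_cover_compact_at (A : set T) : compact A -> cover_compact A.
Proof. by move=> cA; have : @compact pointed_copy A := cA; rewrite compact_cover. Qed.
End PointedCopy.

Lemma compact_cover_compact (T : topologicalType) (A : set T) :
  compact A -> cover_compact A.
Proof.
move=> cA; have [[x0 _]|A0] := pselect (A !=set0).
  exact: (compact_cover_compact_at x0 cA).
by move=> I D f _ Acov; exists fset0 => // x Ax; case: A0; exists x.
Qed.

Lemma compact_hausdorff_closure_subset (T : topologicalType) (x : T) (O : set T) :
  compact [set: T] -> hausdorff_space T -> open O -> O x ->
  exists2 W, open_nbhs x W & closure W `<=` O.
Proof.
move=> Tc Th oO Ox.
have reg : {for x, regular_space T}.
  by apply: compact_regular Th Tc _; exact: filterT.
have [N Nx clN] := reg O (open_nbhs_nbhs (conj oO Ox)).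
exists N°.
  by split; [exact: open_interior | exact: nbhs_singleton (nbhs_interior Nx)].
exact: subset_trans (closureS (@interior_subset _ N)) clN.
Qed.

Lemma compact_nested_closure (T : topologicalType) (C : set T) (V : nat -> set T) :
  compact C -> (forall n, V n.+1 `<=` V n) -> (forall n, V n `&` C !=set0) ->
  exists2 q, C q & forall n, closure (V n) q.
Proof.
move=> cC VS VC; apply: contrapT => noq.
have Ccov : C `<=` \bigcup_(n in [set: nat]) ~` closure (V n).
  move=> q Cq; apply: contrapT => nq; apply: noq; exists q => // n.
  by apply: contrapT => nVq; apply: nq; exists n.
have [D _ Dcov] := compact_cover_compact cC
  (fun n _ => closed_openC (@closed_closure _ (V n))) Ccov.
have [q [VNq Cq]] := VC (\max_(k <- D) k).
have [k Dk nVkq] := Dcov q Cq.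
apply/nVkq/subset_closure.
have VN_Vk : V (\max_(k <- D) k) `<=` V k.
  apply: (homo_leq (f := V) (r := fun B B' => B' `<=` B)) VS _ _ _.
  - by move=> B.
  - by move=> B2 B1 B3 B21 B32; exact: subset_trans B32 B21.
  - exact: leq_bigmax_seq.
exact: VN_Vk.
Qed.

Lemma compact_hausdorff_Baire (I : countType) (T : topologicalType) (C : set T)
    (F : I -> set T) :
  compact [set: T] -> hausdorff_space T -> closed C -> C !=set0 ->
  (forall i, closed (F i)) -> C `<=` \bigcup_i F i ->
  exists i U, [/\ open U, U `&` C !=set0 & U `&` C `<=` F i].
Proof.
(* Otherwise open sets [V n] meeting [C], with closure of [V n.+1] inside [V n]
   and disjoint from the n-th set [Fn n], have closures meeting in a point of
   [C] that lies in no [F i]. *)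
move=> Tc Th cC [c0 Cc0] cF CF; apply: contrapT => noU.
pose Fn n := if @choice.unpickle I n is Some i then F i else set0.
have shrink n V : exists W, open V -> V `&` C !=set0 ->
    [/\ open W, W `&` C !=set0 & closure W `<=` V `&` ~` Fn n].
  have [[oV VC]|nVC] := pselect (open V /\ V `&` C !=set0); last first.
    by exists V => oV VC; case: nVC.
  have [q [[Vq Cq] nFq]] : (V `&` C) `&` ~` Fn n !=set0.
    apply: nonsubset => VCF; rewrite /Fn in VCF; case: choice.unpickle VCF => [i|] VCF.
      by apply: noU; exists i, V.
    by have [q] := VC; move/VCF.
  have oVF : open (V `&` ~` Fn n).
    apply: openI oV (closed_openC _); rewrite /Fn; case: choice.unpickle => [i|] //.
    exact: closed0.
  have [W [oW Wq] clW] := compact_hausdorff_closure_subset Tc Th oVF (conj Vq nFq).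
  by exists W => _ _; split => //; exists q.
have [f fP] := choice (fun nV : nat * set T => shrink nV.1 nV.2).
pose V := fix V n := if n is k.+1 then f (k, V k) else setT.
have VP n : open (V n) /\ V n `&` C !=set0.
  elim: n => [|n [oV VC]]; first by split; [exact: openT | exists c0].
  by have [] := fP (n, V n) oV VC.
have clVS n : closure (V n.+1) `<=` V n `&` ~` Fn n.
  by have [oV VC] := VP n; have [] := fP (n, V n) oV VC.
have VS n : V n.+1 `<=` V n by move=> x /subset_closure /clVS [].
have [q Cq clq] := compact_nested_closure
  (subclosed_compact cC Tc (@subsetT _ C)) VS (fun n => (VP n).2).
have [i _ Fiq] := CF q Cq.
by have [_] := clVS (choice.pickle i) q (clq _); rewrite /Fn choice.pickleK.
Qed.

Lemma subset1_closed (T : topologicalType) (B : set T) :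
  accessible_space T -> is_subset1 B -> closed B.
Proof.
move=> Tacc B1; have [[b Bb]|B0] := pselect (B !=set0); last first.
  suff -> : B = set0 by exact: closed0.
  by apply/seteqP; split => [x Bx|//]; case: B0; exists x.
have -> : B = [set b] by apply/seteqP; split => [x Bx|x ->] //=; exact: B1.
exact: accessible_closed_set1.
Qed.

Lemma iter_continuous (T : topologicalType) (f : T -> T) :
  continuous f -> forall n, continuous (iter n f).
Proof.
move=> cf; elim=> [|n IHn] x /=; first exact: cvg_id.
exact: (continuous_comp (IHn x) (cf _)).
Qed.

Lemma countable_values_locally_constant (T S : topologicalType)
    (f : nat -> T -> S) (A : set T) (E : set S) :
  compact [set: T] -> hausdorff_space T -> accessible_space S ->
  closed A -> A !=set0 -> (forall n, continuous (f n)) -> countable E ->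
  (forall y, A y -> exists n, E (f n y)) ->
  exists n U y0, [/\ open U, U y0, A y0 & forall y, U y -> A y -> f n y = f n y0].
Proof.
move=> Tc Th Sacc cA A0 cf /countable_injP [h hinj] AE.
pose F (nk : nat * nat) := A `&` f nk.1 @^-1` (E `&` h @^-1` [set nk.2]).
have cF nk : closed (F nk).
  rewrite /F; apply: closedI cA _; apply: preimage_closed => [y _|]; first exact: cf.
  apply/(subset1_closed Sacc) => e e' [Ee he] [Ee' he'].
  by apply: hinj; rewrite ?in_setE // he he'.
have AF : A `<=` \bigcup_nk F nk.
  by move=> y Ay; have [n En] := AE y Ay; exists (n, h (f n y)).
have [[n k] [U [oU [y0 [Uy0 Ay0]] UAF]]] := compact_hausdorff_Baire Tc Th cA A0 cF AF.
exists n, U, y0; split => // y Uy Ay.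
have [_ [Ey hy]] := UAF y (conj Uy Ay); have [_ [Ey0 hy0]] := UAF y0 (conj Uy0 Ay0).
by apply: hinj; rewrite ?in_setE //= hy hy0.
Qed.

Section EngelCommutators.
Variables (T : Type) (mul : T -> T -> T) (inv : T -> T) (one : T).

Lemma engel_commE x g n :
  engel_comm mul inv x g n = iter n (comm mul inv^~ g) x.
Proof. by elim: n => //= n ->. Qed.

Lemma engel_commD x g m n :
  engel_comm mul inv x g (m + n) = engel_comm mul inv (engel_comm mul inv x g m) g n.
Proof. by elim: n => [|n IHn]; rewrite ?addn0 // addnS /= IHn. Qed.

Lemma engel_comm_lcs_gen (S : set T) x g c : S x -> S g ->
  lcs mul inv one (gen mul inv one S) c (engel_comm mul inv x g c).
Proof.
move=> Sx Sg; elim: c => [|c IHc] H _ SH /=; first exact: SH.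
apply: SH; exists (engel_comm mul inv x g c) => //.
by exists g => // K _ SK; exact: SK.
Qed.

End EngelCommutators.

Lemma iter_stable (T : Type) (A : set T) (f : T -> T) :
  (forall a, A a -> A (f a)) -> forall n a, A a -> A (iter n f a).
Proof. by move=> fA n a Aa; elim: n => //= n; exact: fA. Qed.

Lemma iter_morph (T : Type) (mul : T -> T -> T) (A : set T) (f : T -> T) :
  (forall a, A a -> A (f a)) ->
  (forall a b, A a -> A b -> f (mul a b) = mul (f a) (f b)) ->
  forall n a b, A a -> A b -> iter n f (mul a b) = mul (iter n f a) (iter n f b).
Proof.
move=> fA fM n a b Aa Ab; elim: n => //= n ->.
by apply: fM; exact: iter_stable.
Qed.

Section GroupAlgebra.
Variables (T : Type) (mul : T -> T -> T) (inv : T -> T) (one : T).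
Hypothesis G : is_group mul inv one.

Lemma mulKg x y : mul (inv x) (mul x y) = y.
Proof. by rewrite (Defs.mulA G) (Defs.mulVg G) (Defs.mul1g G). Qed.

Lemma mulKVg x y : mul x (mul (inv x) y) = y.
Proof. by rewrite (Defs.mulA G) (Defs.mulgV G) (Defs.mul1g G). Qed.

Lemma mulgI x : injective (mul x).
Proof. by move=> y z e; rewrite -(mulKg x y) e mulKg. Qed.

Lemma mulg_eq1_inv x y : mul x y = one -> y = inv x.
Proof. by move=> e; apply: (@mulgI x); rewrite e (Defs.mulgV G). Qed.

Lemma invMg x y : inv (mul x y) = mul (inv y) (inv x).
Proof. by apply/esym/mulg_eq1_inv; rewrite -(Defs.mulA G) mulKVg (Defs.mulgV G). Qed.

Section Morphism.
Variables (A : set T) (f : T -> T).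
Hypothesis A_subgroup : is_subgroup mul inv one A.
Hypothesis fM : forall a b, A a -> A b -> f (mul a b) = mul (f a) (f b).

Lemma morph1 : f one = one.
Proof.
have [A1 _] := A_subgroup.
by apply: (@mulgI (f one)); rewrite -fM // !(Defs.mulg1 G).
Qed.

Lemma morph_translate_eq b a a' : A b -> A a -> A a' ->
  f (mul b (mul (inv a) a')) = f b -> f a' = f a.
Proof.
have [_ [AM AV]] := A_subgroup => Ab Aa Aa' fb.
have fVa' : mul (f (inv a)) (f a') = one.
  have AVa := AV _ Aa.
  apply: (@mulgI (f b)).
  by rewrite -(fM AVa Aa') -(fM Ab (AM _ _ AVa Aa')) fb (Defs.mulg1 G).
have fVa : mul (f (inv a)) (f a) = one.
  by rewrite -(fM (AV _ Aa) Aa) (Defs.mulVg G) morph1.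
by apply: (@mulgI (f (inv a))); rewrite fVa' fVa.
Qed.

End Morphism.

Section CommutatorMap.
Variables (A : set T) (g : T).
Hypotheses (A_normal : is_normal mul inv one A) (A_abelian : is_abelian mul A).

Let conjg a := mul (mul (inv g) a) g.

Lemma comm_conjg a : comm mul inv a g = mul (inv a) (conjg a).
Proof. by rewrite /comm /conjg -!(Defs.mulA G). Qed.

Lemma comm_mem_normal a : A a -> A (comm mul inv a g).
Proof.
have [[_ [AM AV]] AJ] := A_normal => Aa.
by rewrite comm_conjg; apply: AM; [exact: AV | exact: AJ].
Qed.

Lemma comm_morph_abelian a b : A a -> A b ->
  comm mul inv (mul a b) g = mul (comm mul inv a g) (comm mul inv b g).
Proof.
have [[_ [AM AV]] AJ] := A_normal => Aa Ab.
have conjM : conjg (mul a b) = mul (conjg a) (conjg b).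
  by rewrite /conjg -!(Defs.mulA G) mulKVg.
have swap : mul (inv b) (comm mul inv a g) = mul (comm mul inv a g) (inv b).
  by apply: A_abelian; [exact: AV | exact: comm_mem_normal].
rewrite !comm_conjg conjM invMg.
transitivity (mul (mul (inv b) (mul (inv a) (conjg a))) (conjg b)).
  by rewrite -!(Defs.mulA G).
by rewrite -comm_conjg swap comm_conjg -!(Defs.mulA G).
Qed.

End CommutatorMap.

End GroupAlgebra.

Section TopologicalGroup.
Variables (T : topologicalType) (mul : T -> T -> T) (inv : T -> T) (one : T).
Hypothesis TG : is_topological_group mul inv one.

Lemma mul_continuous (f h : T -> T) :
  continuous f -> continuous h -> continuous (fun y => mul (f y) (h y)).
Proof.
have [_ [mulC _]] := TG => cf ch x.
by apply: continuous2_cvg; [exact: (mulC (f x, h x)) | exact: cf | exact: ch].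
Qed.

Lemma comm_continuous g : continuous (comm mul inv ^~ g).
Proof.
have [_ [_ invC]] := TG.
have cst (z : T) : continuous (fun _ : T => z) by exact: cst_continuous.
by apply: mul_continuous; apply: mul_continuous => // x; exact: cvg_id.
Qed.

Lemma locally_constant_morph_finite_image (A U : set T) (f : T -> T) (y0 : T) :
  is_subgroup mul inv one A -> compact A ->
  (forall a b, A a -> A b -> f (mul a b) = mul (f a) (f b)) ->
  open U -> U y0 -> A y0 -> (forall y, U y -> A y -> f y = f y0) ->
  finite_set (f @` A).
Proof.
have [G _] := TG => A_subgroup cA fM oU Uy0 Ay0 fU.
have [_ [AM AV]] := A_subgroup.
(* [V a] is the translate of [U] moving [y0] to [a]; [f] is constant on [V a `&` A]. *)
pose V a := (fun y => mul (mul y0 (inv a)) y) @^-1` U.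
have oV a : open (V a).
  apply: open_comp oU => y _; apply: mul_continuous y; first exact: cst_continuous.
  by move=> x; exact: cvg_id.
have AV' : A `<=` \bigcup_(a in A) V a.
  move=> a Aa; exists a => //.
  by rewrite /V /= -(Defs.mulA G) (Defs.mulVg G) (Defs.mulg1 G).
have [D DA Dcov] := compact_cover_compact cA (fun a _ => oV a) AV'.
apply: sub_finite_set (finite_image f (finite_fset D)).
move=> _ [z Az <-]; have [a Da Vaz] := Dcov z Az.
have Aa : A a by have := DA a Da; rewrite in_setE.
exists a => //; apply/esym/(morph_translate_eq G A_subgroup fM Ay0 Aa Az).
by apply: fU; [rewrite (Defs.mulA G) | apply: (AM) => //; apply: (AM) => //; exact: AV].
Qed.

End TopologicalGroup.

Theorem lemma8p3 (T : topologicalType) (mul : T -> T -> T) (inv : T -> T) (one : T)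
  (HG : is_topological_group mul inv one)
  (Hcompact : compact [set: T])
  (Hhaus : hausdorff_space T)
  (Hsink : forall g : T, exists2 E : set T, countable E & engel_sink mul inv g E)
  (A : set T)
  (HAclosed : closed A)
  (HAnormal : is_normal mul inv one A)
  (HAab : is_abelian mul A)
  (HGA : locally_nilpotent_mod mul inv one A) :
  forall g : T, exists2 E : set T, finite_set E & engel_sink mul inv g E.
Proof.
move=> g; have [G _] := HG; have [A_subgroup _] := HAnormal.
pose psi := comm mul inv ^~ g.
have psiA : forall a, A a -> A (psi a) := comm_mem_normal G g HAnormal.
have psiM := comm_morph_abelian G g HAnormal HAab.
have [E Ecount Esink] := Hsink g.
have A_psi_E y : A y -> exists n, E (iter n psi y).
  by move=> _; have [n0 En0] := Esink y; exists n0; rewrite -engel_commE; exact: En0.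
have [n [U [y0 [oU Uy0 Ay0 psi_const]]]] :=
  countable_values_locally_constant (f := fun n => iter n psi) Hcompact Hhaus
    (hausdorff_accessible Hhaus) HAclosed (ex_intro _ one A_subgroup.1)
    (iter_continuous (comm_continuous HG (g := g))) Ecount A_psi_E.
have cA : compact A by exact: subclosed_compact HAclosed Hcompact (@subsetT _ A).
exists (iter n psi @` A).
  apply: (locally_constant_morph_finite_image HG A_subgroup cA _ oU Uy0 Ay0 psi_const).
  exact: iter_morph.
move=> x; have [c lcs_c] := HGA _ (finite_set2 x g).
exists (c + n)%N => m cnm.
have -> : m = (c + (n + (m - c - n)))%N by lia.
rewrite engel_commD [engel_comm _ _ _ _ (n + _)]engel_commE iterD.
exists (iter (m - c - n) psi (engel_comm mul inv x g c)) => //.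
apply: iter_stable psiA _ _ _; apply: lcs_c.
by apply: engel_comm_lcs_gen; [left | right].
Qed.
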